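(* Let $t$ and $\tau$ be normal terms, $y$ a $\lambda$-variable with $y\notin Fv(t)$ and $(t\;y)\triangleright^*\tau$, let $A,B$ be types, and suppose $\Gamma,y:A\vdash\tau:B;\Delta$. Then $\Gamma\vdash t:A\to B;\Delta$.
   Context: $\lambda\mu$-terms: $t::= x\mid \lambda x.t\mid (t\;t)\mid \mu a.t\mid (a\;t)$ over disjoint infinite sets of $\lambda$-variables and $\mu$-variables; $Fv(t)$ denotes free variables; types built from propositional variables and $\perp$ with $\to$. Reduction $(\lambda x.u\;v)\triangleright u[x:=v]$, $(\mu a.u\;v)\triangleright\mu a.u[a:=^*v]$ ($u[a:=^*v]$ replaces each subterm $(a\;w)$ of $u$ by $(a\;(w\;v))$), $\triangleright^*$ its reflexive transitive compatible closure; normal = no redex. Typing rules for $\Gamma\vdash t:A;\Delta$ ($\Gamma$ declarations of $\lambda$-variables, $\Delta$ of $\mu$-variables): (ax) $\Gamma\vdash x:A;\Delta$ if $x:A\in\Gamma$; ($\to_i$) from $\Gamma,x:A\vdash t:B;\Delta$ infer $\Gamma\vdash\lambda x.t:A\to B;\Delta$; ($\to_e$) from $\Gamma\vdash u:A\to B;\Delta$, $\Gamma\vdash v:A;\Delta$ infer $\Gamma\vdash(u\;v):B;\Delta$; ($\mu$) from $\Gamma\vdash t:\perp;\Delta,a:A$ infer $\Gamma\vdash\mu a.t:A;\Delta$; ($\perp$) from $\Gamma\vdash t:A;\Delta,a:A$ infer $\Gamma\vdash(a\;t):\perp;\Delta,a:A$. *)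

(* Lambda-mu calculus (Parigot) in pure de Bruijn style,
   with two independent index spaces: lambda-variables (Var n, bound by Lam)
   and mu-variables (Named a t, bound by Mu). Terms are thus taken up to
   alpha-conversion. *)
From Stdlib Require Import List Relations.

Inductive ty : Type :=
| TVar : nat -> ty
| Bot : ty
| Arr : ty -> ty -> ty.

Inductive term : Type :=
| Var : nat -> term
| Lam : term -> term
| App : term -> term -> term
| Mu : term -> term
| Named : nat -> term -> term.

Fixpoint lift_l (k : nat) (t : term) : term :=
  match t with
  | Var n => if Nat.leb k n then Var (S n) else Var n
  | Lam u => Lam (lift_l (S k) u)
  | App u v => App (lift_l k u) (lift_l k v)
  | Mu u => Mu (lift_l k u)
  | Named a u => Named a (lift_l k u)
  end.

Fixpoint lift_m (k : nat) (t : term) : term :=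
  match t with
  | Var n => Var n
  | Lam u => Lam (lift_m k u)
  | App u v => App (lift_m k u) (lift_m k v)
  | Mu u => Mu (lift_m (S k) u)
  | Named a u => Named (if Nat.leb k a then S a else a) (lift_m k u)
  end.

(* u[x_k := v], removing the binder of index k (free indices above k decrease) *)
Fixpoint subst_l (k : nat) (v : term) (t : term) : term :=
  match t with
  | Var n => if Nat.eqb n k then v
             else if Nat.ltb k n then Var (pred n) else Var n
  | Lam u => Lam (subst_l (S k) (lift_l 0 v) u)
  | App u w => App (subst_l k v u) (subst_l k v w)
  | Mu u => Mu (subst_l k (lift_m 0 v) u)
  | Named a u => Named a (subst_l k v u)
  end.

(* u[a_k :=* v] : replace every subterm (a_k w) by (a_k (w v)) *)
Fixpoint subst_m (k : nat) (v : term) (t : term) : term :=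
  match t with
  | Var n => Var n
  | Lam u => Lam (subst_m k (lift_l 0 v) u)
  | App u w => App (subst_m k v u) (subst_m k v w)
  | Mu u => Mu (subst_m (S k) (lift_m 0 v) u)
  | Named a u =>
      if Nat.eqb a k then Named a (App (subst_m k v u) v)
      else Named a (subst_m k v u)
  end.

Inductive step : term -> term -> Prop :=
| step_beta : forall u v, step (App (Lam u) v) (subst_l 0 v u)
| step_mu : forall u v, step (App (Mu u) v) (Mu (subst_m 0 (lift_m 0 v) u))
| step_lam : forall u u', step u u' -> step (Lam u) (Lam u')
| step_appl : forall u u' v, step u u' -> step (App u v) (App u' v)
| step_appr : forall u v v', step v v' -> step (App u v) (App u v')
| step_mu_ctx : forall u u', step u u' -> step (Mu u) (Mu u')
| step_named : forall a u u', step u u' -> step (Named a u) (Named a u').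

Definition red : term -> term -> Prop := clos_refl_trans term step.

Fixpoint normal (t : term) : Prop :=
  match t with
  | Var _ => True
  | Lam u => normal u
  | App u v =>
      match u with
      | Lam _ => False
      | Mu _ => False
      | _ => normal u /\ normal v
      end
  | Mu u => normal u
  | Named _ u => normal u
  end.

(* G (resp. D) lists the types of the
   lambda- (resp. mu-) variables by de Bruijn index; extending a context
   with a fresh variable is consing (the new variable gets index 0). *)
Inductive typ : list ty -> list ty -> term -> ty -> Prop :=
| typ_ax : forall G D n A, nth_error G n = Some A -> typ G D (Var n) A
| typ_lam : forall G D t A B, typ (A :: G) D t B -> typ G D (Lam t) (Arr A B)
| typ_app : forall G D u v A B,
    typ G D u (Arr A B) -> typ G D v A -> typ G D (App u v) B
| typ_mu : forall G D t A, typ G (A :: D) t Bot -> typ G D (Mu t) A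
| typ_named : forall G D a t A,
    nth_error D a = Some A -> typ G D t A -> typ G D (Named a t) Bot.

(* Subject expansion holds for reductions in which every contracted redex
   has a bound lambda-variable y as its argument: contracting (\x.u) y or
   (mu a.u) y only renames x into y or replaces each (a w) by (a (w y)), and
   both can be undone on typing derivations, the type of x (resp. of a)
   being read off the type the context already assigns to y.  Starting from
   (t y) with t normal, only such redexes ever occur, because substituting
   variables for variables (or appending variable arguments) creates no
   redex with a non-variable argument.  Expanding back to (t y) and dropping
   the unused y gives t the type A -> B. *)
From Stdlib Require Import List Lia PeanoNat.
Import ListNotations.

Lemma nth_error_middle {X : Type} (l l' : list X) (a : X) :
  nth_error (l ++ a :: l') (length l) = Some a.
Proof. rewrite nth_error_app2, Nat.sub_diag by lia. reflexivity. Qed.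

Lemma nth_error_insert_lt {X : Type} (l l' : list X) (a : X) n :
  n < length l -> nth_error (l ++ a :: l') n = nth_error (l ++ l') n.
Proof. intros Hn. rewrite !nth_error_app1 by lia. reflexivity. Qed.

Lemma nth_error_insert_ge {X : Type} (l l' : list X) (a : X) n :
  length l <= n -> nth_error (l ++ a :: l') (S n) = nth_error (l ++ l') n.
Proof.
  intros Hn. rewrite !nth_error_app2 by lia.
  replace (S n - length l) with (S (n - length l)) by lia. reflexivity.
Qed.

Lemma nth_error_replace {X : Type} (l l' : list X) (a b : X) n :
  n <> length l -> nth_error (l ++ a :: l') n = nth_error (l ++ b :: l') n.
Proof.
  intros Hn. destruct (Nat.lt_ge_cases n (length l)).
  - rewrite !nth_error_app1 by lia. reflexivity.
  - rewrite !nth_error_app2 by lia.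
    destruct (n - length l) eqn:E; [lia | reflexivity].
Qed.

Fixpoint neutral (t : term) : Prop :=
  match t with
  | Var _ | Named _ _ => True
  | App u _ => neutral u
  | _ => False
  end.

(* Neutrality rather than "not an abstraction" is required because it is
   stable under reduction. *)
Fixpoint var_apps (n : nat) (t : term) : Prop :=
  match t with
  | Var _ => True
  | Lam u => var_apps (S n) u
  | App u v =>
      var_apps n u /\ var_apps n v /\
      ((exists j, v = Var j /\ j < n) \/ neutral u)
  | Mu u => var_apps n u
  | Named _ u => var_apps n u
  end.

Lemma normal_App_neutral u v : normal (App u v) -> neutral u.
Proof.
  revert v; induction u; simpl; try tauto.
  intros w [Hu _]. exact (IHu1 _ Hu).
Qed.

Lemma normal_var_apps t m : normal t -> var_apps m t.
Proof.
  revert m; induction t; simpl; intros m Ht; auto.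
  pose proof (normal_App_neutral _ _ Ht) as Hneu.
  destruct t1; try contradiction; destruct Ht as [H1 H2];
    (split; [auto | split; auto]).
Qed.

Lemma normal_lift_l t k : normal t -> normal (lift_l k t).
Proof.
  revert k; induction t; simpl; intros k Ht; auto.
  - destruct (Nat.leb k n); exact I.
  - destruct t1; try contradiction; destruct Ht as [H1 H2];
      specialize (IHt1 k H1); simpl in *;
      try destruct (Nat.leb k n); split; auto.
Qed.

Lemma neutral_subst_l u k v : neutral u -> neutral (subst_l k (Var v) u).
Proof.
  induction u; simpl; intros Hu; auto.
  destruct (Nat.eqb n k); [|destruct (Nat.ltb k n)]; exact I.
Qed.

Lemma neutral_subst_m u k v : neutral u -> neutral (subst_m k v u).
Proof.
  revert k v; induction u; simpl; intros k v Hu; auto.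
  destruct (Nat.eqb n k); exact I.
Qed.

Lemma neutral_step u u' : step u u' -> neutral u -> neutral u'.
Proof. induction 1; simpl; tauto. Qed.

Lemma var_apps_subst_l u k j m :
  k <= m -> j < m -> var_apps (S m) u -> var_apps m (subst_l k (Var j) u).
Proof.
  revert k j m; induction u; simpl; intros k j m Hk Hj Hu; auto.
  - destruct (Nat.eqb n k); [|destruct (Nat.ltb k n)]; exact I.
  - apply IHu; auto; lia.
  - destruct Hu as (H1 & H2 & [(i & -> & Hi) | Hneu]); repeat split; auto.
    + left; simpl.
      destruct (Nat.eqb_spec i k); [|destruct (Nat.ltb_spec k i)];
        eexists; split; eauto; lia.
    + right; apply neutral_subst_l; exact Hneu.
Qed.

Lemma var_apps_subst_m u k j m :
  j < m -> var_apps m u -> var_apps m (subst_m k (Var j) u).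
Proof.
  revert k j m; induction u; simpl; intros k j m Hj Hu; auto.
  - apply IHu; auto; lia.
  - destruct Hu as (H1 & H2 & [(i & -> & Hi) | Hneu]); repeat split; auto.
    + left; simpl; eauto.
    + right; apply neutral_subst_m; exact Hneu.
  - destruct (Nat.eqb n k); simpl; repeat split; eauto.
Qed.

Lemma var_apps_step s s' n : step s s' -> var_apps n s -> var_apps n s'.
Proof.
  intros Hs; revert n; induction Hs; simpl; intros n Hv.
  - destruct Hv as (H1 & H2 & [(j & -> & Hj) | []]).
    apply var_apps_subst_l; auto; lia.
  - destruct Hv as (H1 & H2 & [(j & -> & Hj) | []]).
    apply var_apps_subst_m; auto.
  - auto.
  - destruct Hv as (H1 & H2 & [Hvar | Hneu]); repeat split; auto.
    right; eapply neutral_step; eauto.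
  - destruct Hv as (H1 & H2 & [(j & -> & Hj) | Hneu]); [inversion Hs |].
    repeat split; auto.
  - auto.
  - auto.
Qed.

Lemma var_apps_red s s' n : red s s' -> var_apps n s -> var_apps n s'.
Proof.
  induction 1; intros Hv; auto.
  eapply var_apps_step; eauto.
Qed.

Lemma typ_subst_l_var_inv u G1 G2 D j C T :
  nth_error (G1 ++ G2) j = Some C ->
  typ (G1 ++ G2) D (subst_l (length G1) (Var j) u) T ->
  typ (G1 ++ C :: G2) D u T.
Proof.
  revert G1 D j T; induction u; simpl; intros G1 D j T Hj Hu.
  - constructor.
    destruct (Nat.eqb_spec n (length G1)) as [->|Hne].
    + inversion Hu; subst. rewrite nth_error_middle; congruence.
    + destruct (Nat.ltb_spec (length G1) n); inversion Hu; subst.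
      * destruct n as [|n]; [lia|].
        rewrite nth_error_insert_ge by lia. assumption.
      * rewrite nth_error_insert_lt by lia. assumption.
  - inversion Hu; subst; constructor.
    apply (IHu (_ :: G1) D (S j)); assumption.
  - inversion Hu; subst; econstructor; eauto.
  - inversion Hu; subst; constructor; eauto.
  - inversion Hu; subst; econstructor; eauto.
Qed.

Lemma typ_subst_m_var_inv u G D1 D2 j C T U :
  nth_error G j = Some C ->
  typ G (D1 ++ T :: D2) (subst_m (length D1) (Var j) u) U ->
  typ G (D1 ++ Arr C T :: D2) u U.
Proof.
  revert G D1 j U; induction u; simpl; intros G D1 j U Hj Hu.
  - inversion Hu; subst; constructor; assumption.
  - inversion Hu; subst; constructor.
    apply IHu with (j := S j); assumption.
  - inversion Hu; subst; econstructor; eauto.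
  - inversion Hu; subst; constructor.
    apply (IHu G (U :: D1) j); assumption.
  - destruct (Nat.eqb_spec n (length D1)) as [->|Hne].
    + inversion Hu as [| | | | ? ? ? ? ? HT Happ]; subst.
      rewrite nth_error_middle in HT; injection HT as <-.
      inversion Happ as [| | ? ? ? ? ? ? Hw Hy | |]; subst.
      inversion Hy as [? ? ? ? HC' | | | |]; subst.
      rewrite Hj in HC'; injection HC' as <-.
      econstructor; [apply nth_error_middle | eauto].
    + inversion Hu; subst; econstructor; eauto.
      erewrite nth_error_replace by exact Hne; eassumption.
Qed.

Lemma typ_lift_l_inv t G1 G2 D A T :
  typ (G1 ++ A :: G2) D (lift_l (length G1) t) T -> typ (G1 ++ G2) D t T.
Proof.
  revert G1 D T; induction t; simpl; intros G1 D T Ht.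
  - constructor.
    destruct (Nat.leb_spec (length G1) n); inversion Ht; subst.
    + rewrite <- (nth_error_insert_ge G1 G2 A) by lia. assumption.
    + rewrite <- (nth_error_insert_lt G1 G2 A) by lia. assumption.
  - inversion Ht; subst; constructor.
    apply (IHt (_ :: G1)); assumption.
  - inversion Ht; subst; econstructor; eauto.
  - inversion Ht; subst; constructor; eauto.
  - inversion Ht; subst; econstructor; eauto.
Qed.

Lemma typ_expand_step s s' G D T :
  step s s' -> var_apps (length G) s -> typ G D s' T -> typ G D s T.
Proof.
  intros Hs; revert G D T; induction Hs; simpl; intros G D T Hv Ht.
  - destruct Hv as (_ & _ & [(j & -> & Hj) | []]).
    apply nth_error_Some in Hj.
    destruct (nth_error G j) as [C|] eqn:HC; [|congruence].
    econstructor; [constructor | constructor; eassumption].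
    apply (typ_subst_l_var_inv u [] G D j); assumption.
  - destruct Hv as (_ & _ & [(j & -> & Hj) | []]).
    apply nth_error_Some in Hj.
    destruct (nth_error G j) as [C|] eqn:HC; [|congruence].
    inversion Ht; subst.
    econstructor; [constructor | constructor; eassumption].
    apply (typ_subst_m_var_inv u G [] D j); assumption.
  - inversion Ht; subst; constructor; auto.
  - destruct Hv as (H1 & _ & _); inversion Ht; subst; econstructor; eauto.
  - destruct Hv as (_ & H2 & _); inversion Ht; subst; econstructor; eauto.
  - inversion Ht; subst; constructor; auto.
  - inversion Ht; subst; econstructor; eauto.
Qed.

Lemma typ_expand_red s s' G D T :
  red s s' -> var_apps (length G) s -> typ G D s' T -> typ G D s T.
Proof.
  intros Hr; revert G D T; induction Hr; intros G D T Hv Ht.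
  - eapply typ_expand_step; eauto.
  - exact Ht.
  - eauto using var_apps_red.
Qed.

Theorem mainTheorem14 (t tau : term) (G D : list ty) (A B : ty) :
  normal t -> normal tau ->
  red (App (lift_l 0 t) (Var 0)) tau ->
  typ (A :: G) D tau B ->
  typ G D t (Arr A B).
Proof.
  intros Ht _ Hr Htau.
  assert (Happ : typ (A :: G) D (App (lift_l 0 t) (Var 0)) B).
  { apply (typ_expand_red _ _ _ _ _ Hr); [| exact Htau].
    simpl; repeat split.
    - apply normal_var_apps, normal_lift_l, Ht.
    - left; exists 0; split; [reflexivity | lia]. }
  inversion Happ as [| | ? ? ? ? C ? Hfun Harg | |]; subst.
  inversion Harg as [? ? ? ? HC | | | |]; subst.
  injection HC as HAC; subst.
  exact (typ_lift_l_inv t [] G D _ _ Hfun).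
Qed.
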